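(* Let $k\ge 2$ and $L\ge k$ be integers, and let $z$ be a (complex) fugacity. For a boundary tuple $S=(h_1,\dots,h_k)$ with each $h_i\in\{0,1,\dots,k-1\}$, let $Z_{L,k}(z,S)$ denote the partition function of $k$-mers on the width-$k$ strip with extended right boundary $S$, as defined in the context. Suppose at least one $h_i\neq 0$. Then for every permutation $\sigma$ of $\{1,\dots,k\}$, with $S'=(h_{\sigma(1)},\dots,h_{\sigma(k)})$, we have $$Z_{L,k}(z,S)=Z_{L,k}(z,S').$$
   Context: Consider the strip of lattice sites $(i,x)$ with rows $i\in\{1,\dots,k\}$ and columns $x\in\{1,2,\dots\}$. A $k$-mer is a set of $k$ consecutive sites in a straight line, either horizontal (same row $i$, columns $x,x+1,\dots,x+k-1$) or vertical (same column $x$, all rows $1,\dots,k$). A configuration is a set of $k$-mers no two of which share a site (sites may be left empty). Given $S=(h_1,\dots,h_k)$ with $h_i\in\{0,\dots,k-1\}$, the region is $R_S=\{(i,x): 1\le i\le k,\ 1\le x\le L+h_i\}$. Here $h_i$ is the number of sites to the right of the site $(i,L)$ in row $i$ that are occupied by the horizontal $k$-mer covering $(i,L)$: if $h_i=0$, the row $i$ contains no sites beyond column $L$; if $h_i\ge1$, the configuration is required to contain the horizontal $k$-mer in row $i$ occupying columns $L+h_i-k+1,\dots,L+h_i$ (which covers $(i,L)$). $Z_{L,k}(z,S)$ is the sum, over all configurations of $k$-mers contained in $R_S$ satisfying these requirements, of $z^{N}$, where $N$ is the number of $k$-mers in the configuration. *)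

From mathcomp Require Import all_boot all_order all_algebra all_fingroup all_field.
Set Implicit Arguments. Unset Strict Implicit. Unset Printing Implicit Defensive.
Import GRing.Theory Num.Theory.

(* Conventions (0-indexed): row i of the paper is i : 'I_k (paper row i+1),
   column x of the paper is the nat x-1.  The region R_S is
   { (i,x) : x < L + h i }.  Every k-mer contained in any R_S only uses
   columns < L + k - 1, so start columns range over 'I_(L+k). *)

(* A k-mer: horizontal in row r starting at column s (covering s..s+k-1),
   or vertical in column c (covering rows 0..k-1). *)
Definition kmer (k L : nat) : finType := (('I_k * 'I_(L + k)) + 'I_(L + k))%type.

Definition covers (k L : nat) (m : kmer k L) (i : 'I_k) (x : nat) : bool :=
  match m with
  | inl (r, s) => (i == r) && (s <= x < s + k)
  | inr c => x == c
  end.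

Definition contained (k L : nat) (h : 'I_k -> nat) (m : kmer k L) : bool :=
  match m with
  | inl (r, s) => s + k <= L + h r
  | inr c => [forall i : 'I_k, c < L + h i]
  end.

Definition overlap (k L : nat) (m1 m2 : kmer k L) : bool :=
  [exists i : 'I_k, exists x : 'I_(L + k + k), covers m1 i x && covers m2 i x].

(* the horizontal k-mer in row i occupying (paper) columns
   L+h_i-k+1 .. L+h_i, i.e. 0-indexed start column L + h_i - k *)
Definition required_in (k L : nat) (h : 'I_k -> nat) (C : {set kmer k L}) : bool :=
  [forall i : 'I_k, (0 < h i) ==>
     [exists s : 'I_(L + k), (val s == L + h i - k) && (inl (i, s) \in C)]].

Definition valid_config (k L : nat) (h : 'I_k -> nat) (C : {set kmer k L}) : bool :=
  [forall m in C, contained h m] &&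
  [forall m1 in C, forall m2 in C, (m1 != m2) ==> ~~ overlap m1 m2] &&
  required_in h C.

Definition Z (k L : nat) (z : algC) (h : 'I_k -> nat) : algC :=
  (\sum_(C : {set kmer k L} | valid_config h C) z ^+ #|C|)%R.

From mathcomp Require Import all_boot all_order all_algebra all_fingroup all_field.

(* Relabelling the rows of the strip by a permutation p maps k-mers to k-mers
   (horizontal ones change row, vertical ones span every row and are fixed),
   preserves overlaps, and turns configurations valid for the boundary h into
   configurations valid for h o p^-1.  This bijection preserves the number of
   k-mers, so Z is invariant. *)

Lemma forall_perm {T : finType} (p : {perm T}) (P : pred T) :
  [forall i, P (p i)] = [forall i, P i].
Proof.
apply/forallP/forallP => P_all i; last exact: P_all.
by rewrite -(permKV p i); exact: P_all.
Qed.

Lemma exists_perm {T : finType} (p : {perm T}) (P : pred T) :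
  [exists i, P (p i)] = [exists i, P i].
Proof.
apply/existsP/existsP => [[i Ppi] | [i Pi]]; first by exists (p i).
by exists (p^-1 i)%g; rewrite permKV.
Qed.

Lemma forall_in_imset {aT rT : finType} (f : aT -> rT) (C : {set aT})
    (P : pred rT) :
  [forall y in f @: C, P y] = [forall x in C, P (f x)].
Proof.
apply/forall_inP/forall_inP => P_all => [x xC | _ /imsetP[x xC ->]].
  by apply: P_all; exact: imset_f.
exact: P_all.
Qed.

Section PermuteRows.

Variables (k L : nat) (p : 'S_k).

Definition permute_rows (m : kmer k L) : kmer k L :=
  match m with
  | inl (r, s) => inl (p r, s)
  | inr c => inr c
  end.

Lemma permute_rows_inj : injective permute_rows.
Proof. by move=> [[r1 s1]|c1] [[r2 s2]|c2] //= [] // /perm_inj -> ->. Qed.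

Lemma covers_permute_rows (m : kmer k L) i x :
  covers (permute_rows m) (p i) x = covers m i x.
Proof. by case: m => [[r s]|c] //=; rewrite (inj_eq perm_inj). Qed.

Lemma overlap_permute_rows (m1 m2 : kmer k L) :
  overlap (permute_rows m1) (permute_rows m2) = overlap m1 m2.
Proof.
rewrite /overlap -(exists_perm p).
by apply: eq_existsb => i; apply: eq_existsb => x; rewrite !covers_permute_rows.
Qed.

Lemma contained_permute_rows (h : 'I_k -> nat) (m : kmer k L) :
  contained h (permute_rows m) = contained (fun i => h (p i)) m.
Proof. by case: m => [[r s]|c] //=; rewrite -(forall_perm p). Qed.

Lemma required_in_permute_rows (h : 'I_k -> nat) (C : {set kmer k L}) :
  required_in h (permute_rows @: C) = required_in (fun i => h (p i)) C.
Proof.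
rewrite /required_in -(forall_perm p).
apply: eq_forallb => i; congr (_ ==> _); apply: eq_existsb => s.
by rewrite (mem_imset _ (inl (i, s)) permute_rows_inj).
Qed.

Lemma valid_config_permute_rows (h : 'I_k -> nat) (C : {set kmer k L}) :
  valid_config h (permute_rows @: C) = valid_config (fun i => h (p i)) C.
Proof.
rewrite /valid_config forall_in_imset required_in_permute_rows.
congr (_ && _ && _); first by apply: eq_forallb => m; rewrite contained_permute_rows.
rewrite forall_in_imset; apply: eq_forallb => m1; congr (_ ==> _).
rewrite forall_in_imset; apply: eq_forallb => m2; congr (_ ==> _).
by rewrite (inj_eq permute_rows_inj) overlap_permute_rows.
Qed.

End PermuteRows.

Theorem lemma1 (k L : nat) (z : algC) (h : 'I_k -> nat) (sigma : 'S_k) :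
  2 <= k -> k <= L ->
  (forall i, h i < k) ->
  (exists i, h i != 0) ->
  Z L z h = Z L z (fun i => h (sigma i)).
Proof.
move=> _ _ _ _; have rows_inj := permute_rows_inj k L sigma.
rewrite /Z (reindex_inj (imset_inj rows_inj)).
apply: eq_big => C; first exact: valid_config_permute_rows.
by rewrite card_imset.
Qed.
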